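(* Let $\Bbbk$ be a field, $R=\Bbbk[x,y,z]$, $d'\ge2$ an integer and $I=(x^{2d'},y^{2d'},z^{2d'},x^{d'}y^{d'},xz^{2d'-1})$. Then: (a) the minimal graded free resolution of $R/I$ has the form $$0\to R(-(4d'+1))\oplus R(-(5d'-1))^2\to R(-(2d'+1))\oplus R(-3d')^2\oplus R(-(4d'-1))^2\oplus R(-4d')^2\to R(-2d')^5\to R\to R/I\to0;$$ (b) $\mathrm{Soc}(R/I)\cong\Bbbk(-(4d'-2))\oplus\Bbbk(-(5d'-4))^2$; (c) $V(I_D(M_{2d',5,3d'-3}))$ is a proper subset of $(\mathbb P^N)^5$, where (with $n=3$) $N=\binom{2d'+2}{2}-1$ and $D=\dim_\Bbbk R_{5d'-3}$.
   Context: $\mathrm{Soc}(R/I)=(I:\mathfrak m)/I$ with $\mathfrak m=(x,y,z)$; $\Bbbk(-j)$ is $\Bbbk$ in degree $j$. Parameter setup (with $n=3$): for nonzero forms $f_t=\sum_{|\alpha|=\delta}\lambda^{(t)}_\alpha\mathbf x^\alpha$ ($1\le t\le r$) of degree $\delta$ in $R=\Bbbk[x_1,\dots,x_n]$, set $N=\binom{\delta+n-1}{\delta}-1$ and let $P_{\mathbf f}\in(\mathbb P^N)^r$ be the point with $t$-th component $(\lambda^{(t)}_\alpha)_\alpha$. For $e\ge0$ put $D=\dim_\Bbbk R_{\delta+e}$. Let $S=\Bbbk[Y^{(t)}_\alpha:1\le t\le r,|\alpha|=\delta]$. $M_{\delta,r,e}$ is the $D\times r\binom{e+n-1}{n-1}$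 matrix over $S$ with rows indexed by monomials $\mathbf x^\gamma$, $|\gamma|=\delta+e$, columns indexed by $(t,\beta)$, $|\beta|=e$, and $(\gamma,(t,\beta))$ entry $Y^{(t)}_{\gamma-\beta}$ if $\gamma-\beta\in\mathbb N^n$, $0$ otherwise (the generic coefficient matrix of $\{\mathbf x^\beta f_t\}$ in the monomial basis of $R_{\delta+e}$). $I_D(M_{\delta,r,e})$ is its ideal of $D\times D$ minors and $V(\cdot)$ its zero set in $(\mathbb P^N)^r$. *)

From HB Require Import structures.
From mathcomp Require Import all_boot all_order all_algebra.
From mathcomp Require Import mpoly.
Set Implicit Arguments. Unset Strict Implicit. Unset Printing Implicit Defensive.
Import GRing.Theory.
Local Open Scope ring_scope.

Section Defs.
Variable K : fieldType.
Variable n : nat.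
Local Notation P := {mpoly K[n]}.

Definition in_ideal (k : nat) (g : 'I_k -> P) (p : P) : Prop :=
  exists c : 'I_k -> P, p = \sum_(i < k) c i * g i.

(** The matrix [A] (acting on column vectors) represents a degree-0 graded
    map  (+)_j R(-b j) --> (+)_i R(-a i) : entry (i,j) is homogeneous of
    degree b j - a i (and vanishes when that degree would be negative). *)
Definition graded_mx (m p : nat) (a : 'I_m -> nat) (b : 'I_p -> nat)
  (A : 'M[P]_(m, p)) : Prop :=
  forall i j, A i j = 0 \/ ((a i <= b j)%N /\ A i j \is (b j - a i)%N.-homog).

(** Minimality: all entries lie in the irrelevant ideal (no constant term). *)
Definition minimal_mx (m p : nat) (A : 'M[P]_(m, p)) : Prop :=
  forall i j, (A i j)@_0%MM = 0.

Definition exact_at (m p q : nat) (A : 'M[P]_(m, p)) (B : 'M[P]_(p, q)) : Prop :=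
  A *m B = 0 /\ forall v : 'cV[P]_p, A *m v = 0 -> exists w : 'cV[P]_q, v = B *m w.

(** [R/I] (I generated by [g]) has a minimal graded free resolution
      0 -> F3 -> F2 -> F1 -> R -> R/I -> 0,
    with F_i = (+)_j R(-s_i j). *)
Definition min_graded_free_res3 (k : nat) (g : 'I_k -> P)
  (b1 b2 b3 : nat) (s1 : 'I_b1 -> nat) (s2 : 'I_b2 -> nat) (s3 : 'I_b3 -> nat)
  : Prop :=
  exists (d1 : 'M[P]_(1, b1)) (d2 : 'M[P]_(b1, b2)) (d3 : 'M[P]_(b2, b3)),
    graded_mx (fun _ => 0%N) s1 d1 /\ graded_mx s1 s2 d2 /\ graded_mx s2 s3 d3 /\
    minimal_mx d1 /\ minimal_mx d2 /\ minimal_mx d3 /\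
    (* image of F1 -> R is I, so the cokernel is R/I *)
    (forall p, in_ideal g p <-> in_ideal (fun j => d1 ord0 j) p) /\
    exact_at d1 d2 /\ exact_at d2 d3 /\
    (forall v : 'cV[P]_b3, d3 *m v = 0 -> v = 0).

(** Soc(R/I) = (I : m)/I  with  m = (x_0, ..., x_{n-1}). *)
Definition in_colon_max (k : nat) (g : 'I_k -> P) (p : P) : Prop :=
  forall v : 'I_n, in_ideal g ('X_v * p).

(** Soc(R/I) is isomorphic, as a graded module, to (+)_j k(-s_j):
    there are homogeneous elements f_j of degree s_j of (I:m) whose classes
    form a k-basis of (I:m)/I (m acts as zero on Soc(R/I)). *)
Definition socle_iso (k : nat) (g : 'I_k -> P) (s : seq nat) : Prop :=
  exists f : 'I_(size s) -> P,
    [/\ forall j, f j \is (nth 0%N s j).-homog,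
        forall j, in_colon_max g (f j),
        forall q, in_colon_max g q ->
          exists c : 'I_(size s) -> K, in_ideal g (q - \sum_j c j *: f j) &
        forall c : 'I_(size s) -> K,
          in_ideal g (\sum_j c j *: f j) -> forall j, c j = 0].
End Defs.

Definition expo (n d : nat) :=
  {t : n.-tuple 'I_d.+1 | (\sum_(i < n) (val (tnth t i)) == d)%N}.
Definition ex (n d : nat) (a : expo n d) (i : 'I_n) : nat := val (tnth (val a) i).

(** Evaluation at the point lam = (lam^(t)_alpha) of the generic matrix
    M_{delta,r,e}: rows gamma (|gamma| = delta+e), columns (t, beta) (|beta| = e),
    entry lam^(t)_{gamma-beta} if gamma-beta >= 0, else 0. *)
Definition Meval (K : fieldType) (n delta r e : nat)
  (lam : 'I_r -> expo n delta -> K)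
  (gam : expo n (delta + e)) (tb : 'I_r * expo n e) : K :=
  \sum_(al : expo n delta | [forall i, ex gam i == (ex al i + ex tb.2 i)%N])
     lam tb.1 al.

(** D = dim_k R_{delta+e} = number of monomials of degree delta+e. *)
Definition Ddim (n d : nat) : nat := #|{: expo n d}|.

(** Some D x D minor of M_{delta,r,e} is nonzero at lam (the minor uses all
    D rows, in the order of enumeration, and D distinct columns). *)
Definition some_maximal_minor_nonzero (K : fieldType) (n delta r e : nat)
  (lam : 'I_r -> expo n delta -> K) : Prop :=
  exists col : 'I_(Ddim n (delta + e)) -> 'I_r * expo n e,
    injective col /\
    \det (\matrix_(i, j) @Meval K n delta r e lam (enum_val i) (col j)) != 0.

(** V(I_D(M_{delta,r,e})) is a proper subset of (P^N)^r: some k-point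
    (each component a nonzero coefficient vector) lies outside it. *)
Definition V_proper (K : fieldType) (n delta r e : nat) : Prop :=
  exists lam : 'I_r -> expo n delta -> K,
    (forall t, exists al, lam t al != 0) /\ @some_maximal_minor_nonzero K n delta r e lam.

(* Everything rests on the combinatorics of monomial ideals: a polynomial lies
   in an ideal generated by monomials iff every monomial of its support is
   divisible by a generator.  From this we derive division with remainder by
   monomials, cancellation of coprime monomials, and a "staircase" criterion
   ensuring that a relation sum_i X^(g_i) r_i = 0 is trivial.
   (a) The differentials d1, d2, d3 are explicit monomial matrices; they form
       a graded minimal complex by computation, exactness at F1 follows by
       reducing a syzygy modulo the columns of d2 to a staircase, exactness at
       F2 and injectivity of d3 by cancelling coprime monomials.
   (b) The socle is spanned by the three monomials outside I all of whose
       multiples by a variable lie in I.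
   (c) Since every monomial of degree 5d-3 lies in I, at the point of (P^N)^5
       given by the generators of I every row of M has a column hitting it
       with coefficient 1, and these columns form an identity minor. *)

From HB Require Import structures.
From mathcomp Require Import all_boot all_order all_algebra.
From mathcomp Require Import mpoly.
From mathcomp Require Import zify ring.
From Stdlib Require Import FunctionalExtensionality.
Import GRing.Theory.
Local Open Scope ring_scope.

Set Implicit Arguments. Unset Strict Implicit. Unset Printing Implicit Defensive.

Section IdealMembership.
Variables (K : fieldType) (n k : nat) (gen : 'I_k -> {mpoly K[n]}).

Lemma in_ideal0 : in_ideal gen 0.
Proof. by exists (fun _ => 0); rewrite big1 // => i _; rewrite mul0r. Qed.

Lemma in_idealD p q : in_ideal gen p -> in_ideal gen q -> in_ideal gen (p + q).
Proof.
move=> [c ->] [c' ->]; exists (fun i => c i + c' i).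
by rewrite -big_split; apply: eq_bigr => i _; rewrite mulrDl.
Qed.

Lemma in_idealMl a p : in_ideal gen p -> in_ideal gen (a * p).
Proof.
move=> [c ->]; exists (fun i => a * c i).
by rewrite mulr_sumr; apply: eq_bigr => i _; rewrite mulrA.
Qed.

Lemma in_ideal_gen j : in_ideal gen (gen j).
Proof.
exists (fun i => (i == j)%:R); rewrite (bigD1 j) //= eqxx mul1r big1 ?addr0 //.
by move=> i /negbTE ->; rewrite mul0r.
Qed.

End IdealMembership.

Section MonomialIdeals.
Variables (K : fieldType) (n : nat).
Local Notation P := {mpoly K[n]}.
Implicit Types (p q r : P) (g h m : 'X_{1..n}).

Lemma mcoeffMX_nle p g m : ~~ (g <= m)%MM -> (p * 'X_[g])@_m = 0.
Proof.
move=> ngm; apply/eqP; rewrite mcoeff_eq0; apply/negP.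
rewrite (perm_mem (msuppMX p g)) => /mapP [m' _ e]; move: ngm; rewrite e.
by move/mnm_lepP; apply => i; rewrite mnmDE leq_addr.
Qed.

Lemma mcoeff_comb_nle (I : eqType) (s : seq I) (h : I -> 'X_{1..n}) (c : I -> P) m :
  {in s, forall i, ~~ (h i <= m)%MM} -> (\sum_(i <- s) c i * 'X_[h i])@_m = 0.
Proof.
move=> hs; rewrite raddf_sum big1_seq //= => i /hs.
exact: mcoeffMX_nle.
Qed.

Lemma mpolyX_neq0 g : ('X_[g] : P) != 0.
Proof.
apply/eqP => /(congr1 (mcoeff g)); rewrite mcoeffX eqxx mcoeff0.
by apply/eqP; rewrite oner_eq0.
Qed.

Section MonomialIdeal.
Variables (k : nat) (G : 'I_k -> 'X_{1..n}).
Local Notation gX := (fun j => ('X_[G j] : P)).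

Lemma in_monomial_idealP p :
  in_ideal gX p <-> forall m, p@_m != 0 -> exists j, (G j <= m)%MM.
Proof.
split=> [[c ->] m nz|h].
  apply/existsP; apply: contraR nz; rewrite negb_exists => /forallP hn.
  by apply/eqP; apply: mcoeff_comb_nle => j _; apply: hn.
rewrite (mpolyE p); elim: (msupp p) => [|m s IH]; first by rewrite big_nil; apply: in_ideal0.
rewrite big_cons; apply: in_idealD IH; rewrite -mul_mpolyC.
case: (eqVneq p@_m 0) => [->|/h [j hj]]; first by rewrite mpolyC0 mul0r; apply: in_ideal0.
by rewrite -(submK hj) mpolyXD mulrA; apply: in_idealMl; apply: in_ideal_gen.
Qed.

Lemma monomial_in_ideal g : (exists j, (G j <= g)%MM) -> in_ideal gX 'X_[g].
Proof.
move=> hg; apply/in_monomial_idealP => m; rewrite mcoeffX.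
by have [<- //|_] := eqVneq g m; rewrite eqxx.
Qed.

End MonomialIdeal.

Lemma mcoeff_sum_scaleX (s : seq 'X_{1..n}) (f : 'X_{1..n} -> K) m : uniq s ->
  (\sum_(m' <- s) f m' *: ('X_[m'] : P))@_m = if m \in s then f m else 0.
Proof.
move=> us; rewrite raddf_sum /=; case: ifP => ms.
  rewrite (bigD1_seq m) //= mcoeffZ mcoeffX eqxx mulr1 big1 ?addr0 //.
  by move=> i /negbTE ne; rewrite mcoeffZ mcoeffX ne mulr0.
rewrite big1_seq // => i /andP [_ iin]; rewrite mcoeffZ mcoeffX.
by case: eqP => [e|_]; [rewrite -e iin in ms | rewrite mulr0].
Qed.

Definition avoids p (hs : seq 'X_{1..n}) :=
  forall m, p@_m != 0 -> all (fun h => ~~ (h <= m)%MM) hs.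

Lemma avoids_nil p : avoids p [::].
Proof. by []. Qed.

(* Division by one more monomial [X^g] keeps a remainder reduced: the terms of
   [p] divisible by [X^g] go to the quotient, the others to the remainder. *)
Lemma divide_by_monomial g hs p : avoids p hs ->
  exists c r, p = c * 'X_[g] + r /\ avoids r (g :: hs).
Proof.
move=> hp; pose r := \sum_(m <- msupp p | ~~ (g <= m)%MM) p@_m *: ('X_[m] : P).
have er m : r@_m = if (g <= m)%MM then 0 else p@_m.
  rewrite /r -big_filter mcoeff_sum_scaleX ?filter_uniq ?msupp_uniq //.
  rewrite mem_filter mcoeff_msupp; case: (g <= m)%MM => //=.
  by case: eqP.
have [c ec] : in_ideal (fun _ : 'I_1 => ('X_[g] : P)) (p - r).
  apply/in_monomial_idealP => m; rewrite mcoeffB er.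
  by case: ifP => [hg _|_]; [exists ord0 | rewrite subrr eqxx].
exists (c ord0), r; split; first by rewrite -[p](subrK r) ec big_ord1.
move=> m; rewrite er /=; case: ifP => [_|_ /hp ->]; by rewrite ?eqxx.
Qed.

Lemma coprime_monomial_cancel (a b : 'X_{1..n}) p q :
  (forall i, minn (a i) (b i) = 0)%N -> 'X_[a] * p = 'X_[b] * q ->
  exists w : P, p = 'X_[b] * w /\ q = 'X_[a] * w.
Proof.
move=> cop e; have [c [r [ep hr]]] := divide_by_monomial b (avoids_nil (p := p)).
have er : r * 'X_[a] = (q - 'X_[a] * c) * 'X_[b].
  have -> : r = p - c * 'X_[b] by rewrite ep addrC addKr.
  by rewrite mulrBl [p * _]mulrC e; ring.
have r0 : r = 0.
  apply/mpolyP => m; rewrite mcoeff0; apply/eqP/negPn/negP => nz.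
  have hb : (b <= a + m)%MM.
    apply: contraNT nz => /(mcoeffMX_nle (q - 'X_[a] * c)).
    by rewrite -er mcoeffMX => ->.
  move: (hr m nz) => /=; rewrite andbT => /negP; apply; apply/mnm_lepP => i.
  by move/mnm_lepP: hb => /(_ i); rewrite mnmDE; move: (cop i); lia.
exists c; split; first by rewrite ep r0 addr0 mulrC.
by apply: (mulfI (mpolyX_neq0 b)); rewrite -e ep r0 addr0; ring.
Qed.

Fixpoint staircase (s : seq ('X_{1..n} * P)) : Prop :=
  if s is (g, r) :: s' then
    (forall m, r@_m != 0 -> all (fun gr => ~~ (gr.1 <= g + m)%MM) s') /\ staircase s'
  else True.

(* A staircase admits only the trivial relation [sum X^g r = 0]: the first
   [r] vanishes since its monomials cannot cancel against the later terms. *)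
Lemma staircase_syzygy s : staircase s ->
  \sum_(gr <- s) 'X_[gr.1] * gr.2 = 0 -> all (fun gr => gr.2 == 0) s.
Proof.
elim: s => [//|[g r] s IH] /= [hr hs]; rewrite big_cons /= => e.
have r0 : r = 0.
  apply/mpolyP => m; rewrite mcoeff0; apply/eqP/negPn/negP => nz.
  have erS : 'X_[g] * r = - \sum_(gr <- s) gr.2 * 'X_[gr.1].
    by under eq_bigr do rewrite mulrC; apply/eqP; rewrite -addr_eq0 e.
  apply: (negP nz); apply/eqP; rewrite -(mcoeffMX r g) mulrC erS mcoeffN.
  by rewrite mcoeff_comb_nle ?oppr0 //; apply/allP; exact: hr m nz.
by rewrite r0 eqxx /=; apply: IH hs _; move: e; rewrite r0 mulr0 add0r.
Qed.

End MonomialIdeals.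

Arguments mpolyX_neq0 {K n} g.

Definition mk (a b c : nat) : 'X_{1..3} := [multinom (nth 0%N [:: a; b; c] i) | i < 3].

Notation o3 k := (@Ordinal 3 k isT).
Notation o5 k := (@Ordinal 5 k isT).
Notation o7 k := (@Ordinal 7 k isT).

Lemma ord3P (Q : 'I_3 -> Prop) : Q (o3 0) -> Q (o3 1) -> Q (o3 2) -> forall i, Q i.
Proof. by move=> ? ? ? [[|[|[|i]]] Hi] //; rewrite (bool_irrelevance Hi isT). Qed.

Lemma ord5P (Q : 'I_5 -> Prop) :
  Q (o5 0) -> Q (o5 1) -> Q (o5 2) -> Q (o5 3) -> Q (o5 4) -> forall i, Q i.
Proof. by move=> ? ? ? ? ? [[|[|[|[|[|i]]]]] Hi] //; rewrite (bool_irrelevance Hi isT). Qed.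

Lemma ord7P (Q : 'I_7 -> Prop) : Q (o7 0) -> Q (o7 1) -> Q (o7 2) -> Q (o7 3) ->
  Q (o7 4) -> Q (o7 5) -> Q (o7 6) -> forall i, Q i.
Proof.
by move=> ? ? ? ? ? ? ? [[|[|[|[|[|[|[|i]]]]]]] Hi] //; rewrite (bool_irrelevance Hi isT).
Qed.

Lemma mkE a b c (i : 'I_3) : mk a b c i = nth 0%N [:: a; b; c] i.
Proof. exact: mnmE. Qed.

Lemma mkP (m : 'X_{1..3}) : exists a b c, m = mk a b c.
Proof.
exists (m (o3 0)), (m (o3 1)), (m (o3 2)).
by apply/mnmP; elim/ord3P; rewrite mkE.
Qed.

Lemma mk_add a b c a' b' c' :
  (mk a b c + mk a' b' c')%MM = mk (a + a') (b + b') (c + c').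
Proof. by apply/mnmP; elim/ord3P; rewrite mnmDE !mkE. Qed.

Lemma mk_muln a b c k : (mk a b c *+ k)%MM = mk (a * k) (b * k) (c * k).
Proof. by apply/mnmP; elim/ord3P; rewrite mulmnE !mkE. Qed.

Lemma mk_le a b c a' b' c' :
  (mk a b c <= mk a' b' c')%MM = [&& (a <= a')%N, (b <= b')%N & (c <= c')%N].
Proof.
apply/mnm_lepP/and3P => [h|[h1 h2 h3]]; last by elim/ord3P; rewrite !mkE.
by split; [move: (h (o3 0)) | move: (h (o3 1)) | move: (h (o3 2))]; rewrite !mkE.
Qed.

Lemma mk_eq a b c a' b' c' :
  (mk a b c == mk a' b' c') = [&& a == a', b == b' & c == c'].
Proof.
apply/eqP/and3P => [e|[/eqP-> /eqP-> /eqP->]] //.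
by split; apply/eqP; [move/(congr1 (fun m : 'X_{1..3} => m (o3 0))): e
  | move/(congr1 (fun m : 'X_{1..3} => m (o3 1))): e
  | move/(congr1 (fun m : 'X_{1..3} => m (o3 2))): e]; rewrite !mkE.
Qed.

Lemma mdeg_mk a b c : mdeg (mk a b c) = (a + b + c)%N.
Proof. by rewrite mdegE !big_ord_recr big_ord0 /= !mkE /= add0n. Qed.

Lemma mnm1_mk (i : 'I_3) : U_(i)%MM = mk (i == 0 :> nat) (i == 1 :> nat) (i == 2 :> nat).
Proof. by apply/mnmP => j; rewrite mnm1E mkE; elim/ord3P: j; elim/ord3P: i. Qed.

Lemma sum3 (V : nmodType) (F : 'I_3 -> V) : \sum_(k < 3) F k = F (o3 0) + F (o3 1) + F (o3 2).
Proof.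
rewrite !big_ord_recl big_ord0 addr0 !addrA.
by do 3 try congr (_ + _); congr F; apply: val_inj.
Qed.

Lemma sum5 (V : nmodType) (F : 'I_5 -> V) :
  \sum_(k < 5) F k = F (o5 0) + F (o5 1) + F (o5 2) + F (o5 3) + F (o5 4).
Proof.
rewrite !big_ord_recl big_ord0 addr0 !addrA.
by do 5 try congr (_ + _); congr F; apply: val_inj.
Qed.

Lemma sum7 (V : nmodType) (F : 'I_7 -> V) : \sum_(k < 7) F k =
  F (o7 0) + F (o7 1) + F (o7 2) + F (o7 3) + F (o7 4) + F (o7 5) + F (o7 6).
Proof.
rewrite !big_ord_recl big_ord0 addr0 !addrA.
by do 7 try congr (_ + _); congr F; apply: val_inj.
Qed.

Lemma mulmx_cV_eq0 (R : pzRingType) m p (A : 'M[R]_(m, p)) (v : 'cV[R]_p) :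
  A *m v = 0 -> forall i, \sum_j A i j * v j ord0 = 0.
Proof. by move=> e i; move/matrixP: e => /(_ i ord0); rewrite !mxE. Qed.

Lemma mk_coprime a b c a' b' c' :
  minn a a' = 0%N -> minn b b' = 0%N -> minn c c' = 0%N ->
  forall i, minn (mk a b c i) (mk a' b' c' i) = 0%N.
Proof. by move=> h1 h2 h3; elim/ord3P; rewrite !mkE. Qed.

Lemma expo_of_fun n D (f : 'I_n -> nat) :
  (\sum_i f i)%N = D -> exists a : expo n D, forall i, ex a i = f i.
Proof.
move=> h; have hf i : (f i < D.+1)%N by rewrite ltnS -h (bigD1 i) //= leq_addr.
pose t := [tuple (inord (f i) : 'I_D.+1) | i < n].
have ht : (\sum_(i < n) val (tnth t i) == D)%N.
  by apply/eqP; rewrite -[X in _ = X]h; apply: eq_bigr => i _; rewrite tnth_mktuple /= inordK.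
by exists (exist _ t ht) => i; rewrite /ex /= tnth_mktuple /= inordK.
Qed.

Lemma expo_inj n D (a b : expo n D) : (forall i, ex a i = ex b i) -> a = b.
Proof. by move=> h; apply/val_inj/eq_from_tnth => i; apply: val_inj; exact: h. Qed.

Lemma sum3n (F : 'I_3 -> nat) : (\sum_(k < 3) F k)%N = (F (o3 0) + F (o3 1) + F (o3 2))%N.
Proof.
rewrite !big_ord_recl big_ord0 addn0 !addnA.
by do 2 try congr (_ + _); congr F; apply: val_inj.
Qed.

Lemma expo_sum3 D (a : expo 3 D) : (ex a (o3 0) + ex a (o3 1) + ex a (o3 2))%N = D.
Proof. by rewrite -sum3n; apply/eqP; exact: (valP a). Qed.

Section Proposition24.
Variables (K : fieldType) (d : nat).
Hypothesis hd : (2 <= d)%N.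
Local Notation P := {mpoly K[3]}.
Local Notation X a b c := ('X_[mk a b c] : P).

Definition G (j : nat) : 'X_{1..3} :=
  nth 0%MM [:: mk (2*d) 0 0; mk 0 (2*d) 0; mk 0 0 (2*d); mk d d 0; mk 1 0 (2*d-1)] j.

Definition gens (j : 'I_5) : P := 'X_[G j].

Definition in_I (a b c : nat) : Prop :=
  (2*d <= a \/ 2*d <= b \/ 2*d <= c \/ d <= a /\ d <= b \/ 1 <= a /\ 2*d-1 <= c)%N.

Lemma in_IP a b c : (exists j : 'I_5, (G j <= mk a b c)%MM) <-> in_I a b c.
Proof.
rewrite /in_I; split=> [[j]|]; first by elim/ord5P: j; rewrite /G /= mk_le; lia.
by case=> [h|[h|[h|[h|h]]]];
  [exists (o5 0) | exists (o5 1) | exists (o5 2) | exists (o5 3) | exists (o5 4)];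
  rewrite /G /= mk_le; lia.
Qed.

(* The differentials of the resolution: [d1] is the row of generators, the
   columns of [d2] are the seven minimal syzygies between them, and the columns
   of [d3] the three second syzygies. *)
Definition d2_entry (i j : nat) : P :=
  match i, j with
  | 2, 0 => X 1 0 0 | 4, 0 => - X 0 0 1
  | 0, 1 => X 0 d 0 | 3, 1 => - X d 0 0
  | 1, 2 => X d 0 0 | 3, 2 => - X 0 d 0
  | 0, 3 => X 0 0 (2*d-1) | 4, 3 => - X (2*d-1) 0 0
  | 3, 4 => X 0 0 (2*d-1) | 4, 4 => - X (d-1) d 0
  | 1, 5 => X 0 0 (2*d) | 2, 5 => - X 0 (2*d) 0
  | 1, 6 => X 1 0 (2*d-1) | 4, 6 => - X 0 (2*d) 0
  | _, _ => 0
  end.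

Definition d3_entry (i j : nat) : P :=
  match i, j with
  | 0, 0 => X 0 (2*d) 0 | 5, 0 => X 1 0 0 | 6, 0 => - X 0 0 1
  | 1, 1 => X 0 0 (2*d-1) | 3, 1 => - X 0 d 0 | 4, 1 => X d 0 0
  | 2, 2 => X 0 0 (2*d-1) | 4, 2 => X 0 d 0 | 6, 2 => - X (d-1) 0 0
  | _, _ => 0
  end.

Definition d1 : 'M[P]_(1, 5) := \row_(j < 5) gens j.
Definition d2 : 'M[P]_(5, 7) := \matrix_(i < 5, j < 7) d2_entry i j.
Definition d3 : 'M[P]_(7, 3) := \matrix_(i < 7, j < 3) d3_entry i j.

Lemma monomial_subrr a b c a' b' c' :
  a = a' -> b = b' -> c = c' -> X a b c - X a' b' c' = 0.
Proof. by move=> -> -> ->; rewrite subrr. Qed.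

Lemma monomial_addNr a b c a' b' c' :
  a = a' -> b = b' -> c = c' -> - X a b c + X a' b' c' = 0.
Proof. by move=> -> -> ->; rewrite addNr. Qed.

Ltac monomials_cancel :=
  rewrite /gens /G /= ?mulr0 ?mul0r ?add0r ?addr0 ?mulrN ?mulNr ?opprK -?mpolyXD ?mk_add;
  first [ apply: monomial_subrr; lia | apply: monomial_addNr; lia | exact: erefl ].

Lemma d1d2 : d1 *m d2 = 0.
Proof.
apply/matrixP => i j; rewrite ord1 !mxE sum5 !mxE.
by elim/ord7P: j; monomials_cancel.
Qed.

Lemma d2d3 : d2 *m d3 = 0.
Proof.
apply/matrixP => i j; rewrite !mxE sum7 !mxE.
by elim/ord5P: i; elim/ord3P: j; monomials_cancel.
Qed.

Lemma homX a b c k : (a + b + c)%N = k -> X a b c \is k.-homog.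
Proof. by move=> e; rewrite dhomogX /= mdeg_mk e. Qed.

Lemma homNX a b c k : (a + b + c)%N = k -> - X a b c \is k.-homog.
Proof. by move=> e; rewrite rpredN; apply: homX. Qed.

Ltac graded_entry :=
  first [ right; split; [lia | first [apply: homX; lia | apply: homNX; lia]]
        | left; exact: erefl ].

Definition shifts1 (_ : 'I_5) := (2 * d)%N.
Definition shifts2 (j : 'I_7) := nth 0%N [:: (2 * d + 1)%N; (3 * d)%N; (3 * d)%N;
                          (4 * d - 1)%N; (4 * d - 1)%N; (4 * d)%N; (4 * d)%N] j.
Definition shifts3 (j : 'I_3) := nth 0%N [:: (4 * d + 1)%N; (5 * d - 1)%N; (5 * d - 1)%N] j.

Lemma graded_d1 : graded_mx (fun _ => 0%N) shifts1 d1.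
Proof. by move=> i j; rewrite !mxE /shifts1 /gens /G; elim/ord5P: j => /=; graded_entry. Qed.

Lemma graded_d2 : graded_mx shifts1 shifts2 d2.
Proof.
by move=> i j; rewrite !mxE /shifts1 /shifts2; elim/ord5P: i; elim/ord7P: j => /=;
  graded_entry.
Qed.

Lemma graded_d3 : graded_mx shifts2 shifts3 d3.
Proof.
by move=> i j; rewrite !mxE /shifts2 /shifts3; elim/ord7P: i; elim/ord3P: j => /=;
  graded_entry.
Qed.

Lemma mcoeff0_X a b c : (0 < a + b + c)%N -> (X a b c)@_0 = 0.
Proof. by move=> h; rewrite mcoeffX; case: eqP => // e; move: h; rewrite -mdeg_mk e mdeg0. Qed.

Ltac no_constant_term := rewrite ?mcoeffN ?mcoeff0 ?mcoeff0_X ?oppr0 //; lia.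

Lemma minimal_d1 : minimal_mx d1.
Proof. by move=> i j; rewrite !mxE /gens /G; elim/ord5P: j => /=; no_constant_term. Qed.

Lemma minimal_d2 : minimal_mx d2.
Proof. by move=> i j; rewrite !mxE; elim/ord5P: i; elim/ord7P: j => /=; no_constant_term. Qed.

Lemma minimal_d3 : minimal_mx d3.
Proof. by move=> i j; rewrite !mxE; elim/ord7P: i; elim/ord3P: j => /=; no_constant_term. Qed.

(* The first three rows of [d3] are y^2d, z^(2d-1), z^(2d-1) on the diagonal. *)
Lemma injective_d3 (v : 'cV[P]_3) : d3 *m v = 0 -> v = 0.
Proof.
move/mulmx_cV_eq0 => row; apply/matrixP => i j; rewrite ord1 mxE.
by elim/ord3P: i; [move: (row (o7 0)) | move: (row (o7 1)) | move: (row (o7 2))];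
  rewrite sum3 !mxE /= !mul0r ?add0r ?addr0 => /eqP;
  rewrite mulf_eq0 (negbTE (mpolyX_neq0 _)) => /eqP.
Qed.

(* A syzygy [v] of the columns of [d2] is solved for [w] row by row: each
   relation between two coprime monomials forces a common factor. *)
Lemma exact_d2 (v : 'cV[P]_7) : d2 *m v = 0 -> exists w : 'cV[P]_3, v = d3 *m w.
Proof.
move/mulmx_cV_eq0 => row.
have r0 := row (o5 0); have r1 := row (o5 1); have r2 := row (o5 2); have r3 := row (o5 3).
rewrite !sum7 !mxE /= !mul0r ?add0r ?addr0 ?mulNr in r0 r1 r2 r3.
have [w1 [e0 e5]] : exists w, v (o7 0) ord0 = X 0 (2*d) 0 * w /\ v (o7 5) ord0 = X 1 0 0 * w.
  apply: coprime_monomial_cancel; first by apply: mk_coprime; lia.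
  by apply: subr0_eq; rewrite -r2.
have [w2 [e1 e3]] : exists w, v (o7 1) ord0 = X 0 0 (2*d-1) * w /\ - v (o7 3) ord0 = X 0 d 0 * w.
  apply: coprime_monomial_cancel; first by apply: mk_coprime; lia.
  by apply: subr0_eq; rewrite -r0 mulrN opprK.
have [w3 [e2 e4]] : exists w, v (o7 2) ord0 = X 0 0 (2*d-1) * w /\
    v (o7 4) ord0 - X d 0 0 * w2 = X 0 d 0 * w.
  apply: coprime_monomial_cancel; first by apply: mk_coprime; lia.
  by apply/esym/subr0_eq; rewrite -r3 e1; ring.
have e6 : v (o7 6) ord0 = - X 0 0 1 * w1 - X (d-1) 0 0 * w3.
  apply: (mulfI (mpolyX_neq0 (mk 1 0 (2*d-1)))); apply: subr0_eq.
  have ex : X d 0 0 * X 0 0 (2*d-1) = X 1 0 (2*d-1) * X (d-1) 0 0.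
    by rewrite -!mpolyXD !mk_add; congr 'X_[mk _ _ _]; lia.
  have ez : X 0 0 (2*d) * X 1 0 0 = X 1 0 (2*d-1) * X 0 0 1.
    by rewrite -!mpolyXD !mk_add; congr 'X_[mk _ _ _]; lia.
  by rewrite -r1 e2 e5 !mulrA ex ez; ring.
exists (\col_(i < 3) nth 0 [:: w1; w2; w3] i).
apply/matrixP => i j; rewrite ord1 !mxE sum3 !mxE.
elim/ord7P: i => /=; rewrite ?mul0r ?add0r ?addr0.
- by rewrite e0.
- by rewrite e1.
- by rewrite e2.
- by rewrite mulNr -e3 opprK.
- by rewrite -e4 addrC subrK.
- by rewrite e5.
- by rewrite e6; ring.
Qed.

Definition syzygy_terms (u : 'cV[P]_5) : seq ('X_{1..3} * P) :=
  [:: (G 0, u (o5 0) ord0); (G 1, u (o5 1) ord0); (G 2, u (o5 2) ord0);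
      (G 3, u (o5 3) ord0); (G 4, u (o5 4) ord0)].

Lemma d1_syzygy_terms u :
  (d1 *m u) ord0 ord0 = \sum_(gr <- syzygy_terms u) 'X_[gr.1] * gr.2.
Proof. by rewrite mxE sum5 !big_cons big_nil addr0 !addrA !mxE. Qed.

Lemma reduce_syzygy (v : 'cV[P]_5) :
  exists w : 'cV[P]_7, staircase (syzygy_terms (v - d2 *m w)).
Proof.
set u0 := v (o5 0) ord0; set u1 := v (o5 1) ord0; set u2 := v (o5 2) ord0.
set u3 := v (o5 3) ord0.
have [q1 [s0 [eu0 as0]]] := divide_by_monomial (mk 0 d 0) (avoids_nil (p := u0)).
have [q3 [r0 [es0 ar0]]] := divide_by_monomial (mk 0 0 (2*d-1)) as0.
have [q2 [s1 [eu1 as1]]] := divide_by_monomial (mk d 0 0) (avoids_nil (p := u1)).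
have [q5 [s1' [es1 as1']]] := divide_by_monomial (mk 0 0 (2*d)) as1.
have [q6 [r1 [es1' ar1]]] := divide_by_monomial (mk 1 0 (2*d-1)) as1'.
have [q0 [r2 [eu2 ar2]]] :=
  divide_by_monomial (mk 1 0 0) (avoids_nil (p := u2 + X 0 (2*d) 0 * q5)).
have [q4 [r3 [eu3 ar3]]] := divide_by_monomial (mk 0 0 (2*d-1))
  (avoids_nil (p := u3 + X d 0 0 * q1 + X 0 d 0 * q2)).
pose qs := [:: q0; q1; q2; q3; q4; q5; q6]; exists (\col_(i < 7) qs`_i).
have entry k : (v - d2 *m \col_(i < 7) qs`_i) k ord0 =
    v k ord0 - \sum_(j < 7) d2_entry k j * qs`_j.
  by rewrite !mxE; congr (_ - _); apply: eq_bigr => j _; rewrite !mxE.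
have E0 : (v - d2 *m \col_(i < 7) qs`_i) (o5 0) ord0 = r0.
  by rewrite entry sum7 /= ?mul0r ?add0r ?addr0 -/u0 eu0 es0; ring.
have E1 : (v - d2 *m \col_(i < 7) qs`_i) (o5 1) ord0 = r1.
  by rewrite entry sum7 /= ?mul0r ?add0r ?addr0 -/u1 eu1 es1 es1'; ring.
have E2 : (v - d2 *m \col_(i < 7) qs`_i) (o5 2) ord0 = r2.
  by rewrite entry sum7 /= ?mul0r ?add0r ?addr0 -/u2 (canRL (addrK _) eu2); ring.
have E3 : (v - d2 *m \col_(i < 7) qs`_i) (o5 3) ord0 = r3.
  rewrite entry -/u3.
  have -> : u3 = q4 * X 0 0 (2*d-1) + r3 - (X d 0 0 * q1 + X 0 d 0 * q2).
    by rewrite -eu3; ring.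
  by rewrite sum7 /= ?mul0r ?add0r ?addr0; ring.
rewrite /syzygy_terms E0 E1 E2 E3 /=.
split; first by move=> m /ar0; have [a [b [c ->]]] := mkP m; rewrite /G /= !mk_add !mk_le; lia.
split; first by move=> m /ar1; have [a [b [c ->]]] := mkP m; rewrite /G /= !mk_add !mk_le; lia.
split; first by move=> m /ar2; have [a [b [c ->]]] := mkP m; rewrite /G /= !mk_add !mk_le; lia.
split; first by move=> m /ar3; have [a [b [c ->]]] := mkP m; rewrite /G /= !mk_add !mk_le; lia.
by [].
Qed.

(* Exactness at F1: a syzygy [v] of the generators is a combination of the
   columns of [d2], since the reduced syzygy [v - d2 *m w] vanishes. *)
Lemma exact_d1 (v : 'cV[P]_5) : d1 *m v = 0 -> exists w : 'cV[P]_7, v = d2 *m w.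
Proof.
move=> hv; have [w hw] := reduce_syzygy v; exists w.
have hrel : d1 *m (v - d2 *m w) = 0 by rewrite mulmxBr mulmxA d1d2 mul0mx hv subr0.
have := staircase_syzygy hw; rewrite -d1_syzygy_terms hrel mxE => /(_ erefl).
rewrite /= andbT => /and5P [] /eqP r0 /eqP r1 /eqP r2 /eqP r3 /eqP r4.
apply/eqP; rewrite -subr_eq0; apply/eqP/matrixP => i j; rewrite ord1 [RHS]mxE.
by elim/ord5P: i.
Qed.

Definition socle_exp (j : nat) : 'X_{1..3} :=
  nth 0%MM [:: mk 0 (2*d-1) (2*d-1); mk (2*d-1) (d-1) (2*d-2); mk (d-1) (2*d-1) (2*d-2)] j.

Lemma socle_exponents a b c : ~ in_I a b c ->
  in_I a.+1 b c -> in_I a b.+1 c -> in_I a b c.+1 ->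
  exists j : 'I_3, mk a b c = socle_exp j.
Proof.
rewrite /in_I => h0 hx hy hz.
have [[-> [-> ->]] | [[-> [-> ->]] | [-> [-> ->]]]] :
  (a = 0 /\ b = 2*d-1 /\ c = 2*d-1 \/ a = 2*d-1 /\ b = d-1 /\ c = 2*d-2 \/
   a = d-1 /\ b = 2*d-1 /\ c = 2*d-2)%N by lia.
- by exists (o3 0).
- by exists (o3 1).
- by exists (o3 2).
Qed.

Lemma socle_exp_notin_I (i : 'I_3) (j : 'I_5) : ~~ (G j <= socle_exp i)%MM.
Proof.
apply/negP => hj; have : exists j : 'I_5, (G j <= socle_exp i)%MM by exists j.
by clear hj; elim/ord3P: i; rewrite /socle_exp /= in_IP /in_I; lia.
Qed.

Lemma socle_exp_in_colon (i v : 'I_3) : in_ideal gens ('X_v * 'X_[socle_exp i]).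
Proof.
rewrite -mpolyXD; apply: monomial_in_ideal.
by elim/ord3P: v; elim/ord3P: i; rewrite mnm1_mk /socle_exp /= mk_add;
  apply/in_IP; rewrite /in_I; lia.
Qed.

(* The three socle exponents are distinct (this uses d >= 2). *)
Lemma socle_exp_eq (i j : 'I_3) : (socle_exp i == socle_exp j) = (i == j).
Proof. by elim/ord3P: i; elim/ord3P: j; rewrite /socle_exp /= mk_eq; apply/idP/idP; lia. Qed.

Lemma socle_comb_coef (c : 'I_3 -> K) (k : 'I_3) :
  (\sum_j c j *: ('X_[socle_exp j] : P))@_(socle_exp k) = c k.
Proof.
rewrite raddf_sum (bigD1 k) //= mcoeffZ mcoeffX eqxx mulr1 big1 ?addr0 // => j /negbTE hj.
by rewrite mcoeffZ mcoeffX socle_exp_eq hj mulr0.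
Qed.

Lemma socle_indep (c : 'I_3 -> K) :
  in_ideal gens (\sum_j c j *: 'X_[socle_exp j]) -> forall j, c j = 0.
Proof.
move/in_monomial_idealP => h k; apply/eqP/negPn/negP => nz.
have [|j] := h (socle_exp k); first by rewrite socle_comb_coef.
by apply/negP; apply: socle_exp_notin_I.
Qed.

(* Every element of (I : m) is, modulo I, a combination of socle monomials:
   a monomial of its support outside I has all its multiples by a variable
   in I, so it is one of the three socle monomials. *)
Lemma socle_span q : in_colon_max gens q ->
  exists c : 'I_3 -> K, in_ideal gens (q - \sum_j c j *: 'X_[socle_exp j]).
Proof.
move=> hq; exists (fun j => q@_(socle_exp j)); apply/in_monomial_idealP => m.
case: (boolP [exists k : 'I_3, socle_exp k == m]) => [/existsP [k /eqP <-]|].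
  by rewrite mcoeffB socle_comb_coef subrr eqxx.
rewrite negb_exists => /forallP ns.
have -> : (q - \sum_(j < 3) q@_(socle_exp j) *: 'X_[socle_exp j])@_m = q@_m.
  rewrite mcoeffB raddf_sum big1 ?subr0 // => j _ /=.
  by rewrite mcoeffZ mcoeffX (negbTE (ns j)) mulr0.
move=> nz.
have hv (v : 'I_3) : exists j : 'I_5, (G j <= U_(v) + m)%MM.
  by apply: (in_monomial_idealP _ _).1 (hq v) _ _; rewrite mulrC mcoeffMX.
case: (boolP [exists j : 'I_5, (G j <= m)%MM]) => [/existsP //|/existsPn nI].
have [a [b [c em]]] := mkP m; move: hv ns nI; rewrite em => hv ns nI.
have [||||k ek] := @socle_exponents a b c.
- by move/in_IP => [j]; rewrite (negbTE (nI j)).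
- by apply/in_IP; move: (hv (o3 0)); rewrite mnm1_mk mk_add.
- by apply/in_IP; move: (hv (o3 1)); rewrite mnm1_mk mk_add.
- by apply/in_IP; move: (hv (o3 2)); rewrite mnm1_mk mk_add.
by move: (ns k); rewrite ek eqxx.
Qed.

Lemma in_I_of_deg a b c : (a + b + c = 5 * d - 3)%N -> in_I a b c.
Proof. by rewrite /in_I; lia. Qed.

Lemma deg_G (t : 'I_5) : (\sum_(l < 3) G t l)%N = (2 * d)%N.
Proof. by rewrite -mdegE; elim/ord5P: t; rewrite /G /= mdeg_mk; lia. Qed.

(* The point of (P^N)^5 whose t-th component is the coefficient vector of
   the t-th generator of I. *)
Definition generator_point (t : 'I_5) (al : expo 3 (2 * d)) : K :=
  [forall l, ex al l == G t l]%:R.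

Lemma generator_point_nz t : exists al, generator_point t al != 0.
Proof.
have [al hal] := expo_of_fun (deg_G t); exists al; rewrite /generator_point.
have -> : [forall l, ex al l == G t l] by apply/forallP => l; rewrite hal.
by rewrite oner_eq0.
Qed.

Lemma Meval_generator_point e (g : expo 3 (2 * d + e)) (tb : 'I_5 * expo 3 e) :
  Meval generator_point g tb = [forall l, ex g l == G tb.1 l + ex tb.2 l]%:R :> K.
Proof.
rewrite /Meval /generator_point; case: (boolP [forall l, _]) => H.
- have [al0 h0] := expo_of_fun (deg_G tb.1).
  have hal0 : [forall l, ex al0 l == G tb.1 l] by apply/forallP => l; rewrite h0.
  rewrite (bigD1 al0) /=; last by apply/forallP => l; rewrite h0; exact: (forallP H l).
  rewrite hal0 big1 ?addr0 // => al /andP [_ nal].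
  case: (boolP [forall l, ex al l == G tb.1 l]) => // hal.
  by move/eqP: nal; case; apply: expo_inj => l; rewrite h0; exact/eqP/(forallP hal l).
- rewrite big1 // => al hal; case: (boolP [forall l, ex al l == G tb.1 l]) => // h2.
  move/negP: H; case; apply/forallP => l.
  by move/forallP: hal => /(_ l) /eqP ->; move/forallP: h2 => /(_ l) /eqP ->.
Qed.

(* Each row gamma of M_(2d,5,3d-3) has a column (t, beta) with
   X^gamma = X^beta times the t-th generator, since X^gamma lies in I. *)
Lemma row_covered (g : expo 3 (2 * d + (3 * d - 3))) :
  exists tb : 'I_5 * expo 3 (3 * d - 3), [forall l, ex g l == G tb.1 l + ex tb.2 l].
Proof.
have hs := expo_sum3 g.
have [t ht] : exists t : 'I_5, (G t <= mk (ex g (o3 0)) (ex g (o3 1)) (ex g (o3 2)))%MM.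
  by apply/in_IP/in_I_of_deg; lia.
have gs := deg_G t; move: ht gs.
have [a [b [c ea]]] := mkP (G t); rewrite ea mk_le sum3n !mkE /= => ht gs.
have [be hb] : exists be : expo 3 (3 * d - 3), forall l, ex be l = (ex g l - G t l)%N.
  by apply: expo_of_fun; rewrite sum3n ea !mkE /=; lia.
exists (t, be); apply/forallP => l; rewrite /= hb ea.
by elim/ord3P: l; rewrite !mkE /=; apply/eqP; lia.
Qed.

(* Part (c): choosing for each row a covering column gives the identity as
   a maximal minor of M at the generator point. *)
Lemma V_proper_generators : V_proper K 3 (2 * d) 5 (3 * d - 3).
Proof.
exists generator_point; split; first exact: generator_point_nz.
pose col (i : 'I_(Ddim 3 (2 * d + (3 * d - 3)))) := xchoose (row_covered (enum_val i)).
have colP i : [forall l, ex (enum_val i) l == G (col i).1 l + ex (col i).2 l].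
  exact: (xchooseP (row_covered _)).
exists col; split.
  move=> i j e; apply: enum_val_inj; apply: expo_inj => l.
  by move: (forallP (colP i) l) (forallP (colP j) l); rewrite e => /eqP -> /eqP ->.
(* Distinct rows are hit by distinct columns, so the minor is the identity. *)
set M := \matrix_(i, j) _; have -> : M = 1%:M; last by rewrite det1 oner_eq0.
apply/matrixP => i j; rewrite !mxE Meval_generator_point.
case: (eqVneq i j) => [->|nij]; first by rewrite colP.
case: (boolP [forall l, _]) => // h; case/eqP: nij; apply: enum_val_inj; apply: expo_inj => l.
by move: (forallP h l) (forallP (colP j) l) => /eqP -> /eqP ->.
Qed.

Lemma resolution_R_mod_I :
  min_graded_free_res3 gens shifts1 shifts2 shifts3.
Proof.
have d1_row : (fun j => d1 ord0 j) = gens.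
  by apply: functional_extensionality => j; rewrite mxE.
exists d1, d2, d3.
split; first exact: graded_d1.
split; first exact: graded_d2.
split; first exact: graded_d3.
split; first exact: minimal_d1.
split; first exact: minimal_d2.
split; first exact: minimal_d3.
split; first by rewrite d1_row.
split; first by split; [exact: d1d2 | exact: exact_d1].
split; first by split; [exact: d2d3 | exact: exact_d2].
exact: injective_d3.
Qed.

Lemma socle_R_mod_I : socle_iso gens [:: (4 * d - 2)%N; (5 * d - 4)%N; (5 * d - 4)%N].
Proof.
exists (fun j : 'I_3 => 'X_[socle_exp j]); split.
- by elim/ord3P; rewrite /socle_exp /=; apply: homX; lia.
- by move=> j v; apply: socle_exp_in_colon.
- exact: socle_span.
- exact: socle_indep.
Qed.

End Proposition24.

Lemma gens_eq (K : fieldType) (d : nat) (j : 'I_5) :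
  nth 0 [:: ('X_(@inord 2 0) : {mpoly K[3]}) ^+ (2 * d); 'X_(@inord 2 1) ^+ (2 * d);
     'X_(@inord 2 2) ^+ (2 * d); 'X_(@inord 2 0) ^+ d * 'X_(@inord 2 1) ^+ d;
     'X_(@inord 2 0) * 'X_(@inord 2 2) ^+ (2 * d - 1)] j = gens K d j.
Proof.
rewrite /gens /G !mnm1_mk !inordK //; elim/ord5P: j => /=;
  by rewrite ?mpolyXn ?mk_muln -?mpolyXD ?mk_add; congr 'X_[mk _ _ _]; lia.
Qed.

Theorem proposition2p4 (K : fieldType) (d : nat) (hd : (2 <= d)%N) :
  let x : {mpoly K[3]} := 'X_(@inord 2 0) in
  let y : {mpoly K[3]} := 'X_(@inord 2 1) in
  let z : {mpoly K[3]} := 'X_(@inord 2 2) in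
  let I : 'I_5 -> {mpoly K[3]} := fun j =>
    nth 0 [:: x ^+ (2 * d); y ^+ (2 * d); z ^+ (2 * d);
              x ^+ d * y ^+ d; x * z ^+ (2 * d - 1)] j in
  [/\ (* (a) *)
      min_graded_free_res3 I
        (fun _ : 'I_5 => (2 * d)%N)
        (fun j : 'I_7 => nth 0%N [:: (2 * d + 1)%N; (3 * d)%N; (3 * d)%N;
                          (4 * d - 1)%N; (4 * d - 1)%N; (4 * d)%N; (4 * d)%N] j)
        (fun j : 'I_3 => nth 0%N [:: (4 * d + 1)%N; (5 * d - 1)%N; (5 * d - 1)%N] j),
      (* (b) *)
      socle_iso I [:: (4 * d - 2)%N; (5 * d - 4)%N; (5 * d - 4)%N] &
      (* (c) *)
      V_proper K 3 (2 * d) 5 (3 * d - 3)].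
Proof.
move=> x y z I.
have -> : I = gens K d by apply: functional_extensionality; exact: gens_eq.
split.
- exact: resolution_R_mod_I.
- exact: socle_R_mod_I.
- exact: V_proper_generators.
Qed.
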